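(* The ind-scheme $\mathcal M^\infty=\bigcup_N\mathcal M^N$ is Zariski-dense in $L^-\mathrm{GL}_K$; i.e., a function in $\mathbb C[L^-\mathrm{GL}_K]$ vanishing on $\mathcal M^N$ for every $N$ is zero.
   Context: $\mathcal M(N,K)=\mathrm{Rep}(N,K)/\!/\mathrm{GL}_N$, $\mathrm{Rep}(N,K)$ being triples $(B,\psi,\overline\psi)$ with $B\in\mathrm{Mat}_{N\times N}(\mathbb C)$, $\psi\in\mathrm{Mat}_{N\times K}$, $\overline\psi\in\mathrm{Mat}_{K\times N}$, and $g\cdot(B,\psi,\overline\psi)=(gBg^{-1},g\psi,\overline\psi g^{-1})$. $L^-\mathrm{GL}_K$ is the group scheme of power series $1+\sum_{i\ge1}g_iz^{-i}$, $g_i\in\mathfrak{gl}_K$, with coordinate ring $\mathbb C[T^{(n)}_{ab}:n\ge0,1\le a,b\le K]$, $T^{(n)}_{ab}$ being the $(a,b)$ entry of $g_{n+1}$. Let $\pi_N:\mathcal M(N,K)\to L^-\mathrm{GL}_K$, $(B,\psi,\overline\psi)\mapsto1+\overline\psi(z-\widetilde B/2)^{-1}\psi=1+\sum_{i\ge1}2^{1-i}\overline\psi\widetilde B^{i-1}\psi z^{-i}$, where $\widetilde B=B+\psi\overline\psi$. $\mathcal M^N\subset L^-\mathrm{GL}_K$ is the scheme-theoretic image of $\pi_N$; $\mathcal M^N\subset\mathcal M^{N'}$ for $N<N'$. *)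

From HB Require Import structures.
From mathcomp Require Import all_boot all_order all_algebra.
From mathcomp Require Import Rstruct.
From mathcomp.real_closed Require Import complex.
From mathcomp Require Import mpoly.
Set Implicit Arguments. Unset Strict Implicit. Unset Printing Implicit Defensive.
Import GRing.Theory.
Local Open Scope ring_scope.

Definition CC : Type := (Rdefinitions.R)[i].
HB.instance Definition _ := GRing.Field.on CC.

(* The coordinates T^{(n)}_{ab} (n >= 0, a b : 'I_K) of the point
   pi_N(B, psi, psibar) of L^-GL_K, i.e. the (a,b) entry of the coefficient
   g_{n+1} = 2^{-n} psibar Btilde^n psi of z^{-(n+1)} in
   1 + psibar (z - Btilde/2)^{-1} psi, with Btilde = B + psi psibar. *)
Definition Btilde (N K : nat) (B : 'M[CC]_N) (psi : 'M[CC]_(N, K))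
  (psib : 'M[CC]_(K, N)) : 'M[CC]_N := B + psi *m psib.

Definition piN_coord (N K : nat) (B : 'M[CC]_N) (psi : 'M[CC]_(N, K))
  (psib : 'M[CC]_(K, N)) (n : nat) (a b : 'I_K) : CC :=
  ((2%:R)^-1 ^+ n *: (psib *m (Btilde B psi psib ^+ n) *m psi)) a b.

(* Over an infinite field a polynomial vanishing at every point is zero, so it
   suffices to show that the finitely many coordinates T^(n)_ab (n < D) occurring
   in f take arbitrary prescribed values c n a b on some M(N,K).  Take N = D K,
   viewed as D blocks of size K: let Btilde be the block shift, psi the inclusion
   of the first block and psibar the row of blocks 2^n c n; then
   2^-n psibar Btilde^n psi = c n, and B := Btilde - psi psibar. *)

From HB Require Import structures.
From mathcomp Require Import all_boot all_order all_algebra.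
From mathcomp Require Import mpoly zify Rstruct.
From mathcomp.real_closed Require Import complex.
Set Implicit Arguments. Unset Strict Implicit. Unset Printing Implicit Defensive.
Import GRing.Theory Num.Theory.
Local Open Scope ring_scope.

Section VanishingPolynomials.
Variable R : idomainType.
Hypothesis natr_inj : injective (GRing.natmul (1 : R)).

Lemma poly_eq0_of_horner (q : {poly R}) : (forall t, q.[t] = 0) -> q = 0.
Proof.
move=> q0; apply: (@roots_geq_poly_eq0 _ q [seq k%:R | k <- iota 0 (size q)]).
- by apply/allP => _ /mapP[k _ ->]; rewrite /root q0.
- by rewrite (map_inj_uniq natr_inj) iota_uniq.
- by rewrite size_map size_iota.
Qed.

Section Slices.
Variable n : nat.

Definition mnmbelast (m : 'X_{1..n.+1}) : 'X_{1..n} :=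
  [multinom m (lift ord_max i) | i < n].

Definition rcons_fun (w : 'I_n -> R) (t : R) (i : 'I_n.+1) : R :=
  if unlift ord_max i is Some j then w j else t.

Definition mslice (p : {mpoly R[n.+1]}) (j : nat) : {mpoly R[n]} :=
  \sum_(m <- msupp p | m ord_max == j) p@_m *: 'X_[mnmbelast m].

Definition meval_belast (w : 'I_n -> R) (p : {mpoly R[n.+1]}) : {poly R} :=
  \sum_(m <- msupp p)
     (p@_m * \prod_(i < n) w i ^+ m (lift ord_max i)) *: 'X^(m ord_max).

Lemma horner_meval_belast w t p :
  (meval_belast w p).[t] = meval (rcons_fun w t) p.
Proof.
rewrite mevalE /meval_belast horner_sum; apply: eq_bigr => m _.
rewrite hornerZ hornerXn (bigD1_ord ord_max) //= /rcons_fun unlift_none mulrA.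
by rewrite mulrAC; congr (_ * _); apply: eq_bigr => i _; rewrite liftK.
Qed.

Lemma coef_meval_belast w p j : (meval_belast w p)`_j = meval w (mslice p j).
Proof.
rewrite coef_sum /mslice raddf_sum /= [RHS]big_mkcond /=; apply: eq_bigr => m _.
rewrite coefZ coefXn eq_sym; case: eqP => _; last by rewrite mulr0.
by rewrite mulr1 mevalZ mevalX; congr (_ * _); apply: eq_bigr => i _; rewrite mnmE.
Qed.

Lemma eq_mnmbelast (m m' : 'X_{1..n.+1}) :
  m' ord_max = m ord_max -> (mnmbelast m' == mnmbelast m) = (m' == m).
Proof.
move=> eq_last; apply/eqP/eqP => [/mnmP eq_init|-> //]; apply/mnmP => i.
by case: (unliftP ord_max i) => [j ->|-> //]; have := eq_init j; rewrite !mnmE.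
Qed.

Lemma mcoeff_mslice p m : (mslice p (m ord_max))@_(mnmbelast m) = p@_m.
Proof.
rewrite {2}(mpolyE p) /mslice !raddf_sum /= [LHS]big_mkcond /=.
apply: eq_bigr => m' _; rewrite !mcoeffZ !mcoeffX.
case: eqP => [/eq_mnmbelast -> // | ne_last].
by case: (eqVneq m' m) ne_last => [-> // | _ _]; rewrite mulr0.
Qed.

End Slices.

Lemma mpoly_eq0_of_meval n (p : {mpoly R[n]}) : (forall v, meval v p = 0) -> p = 0.
Proof.
elim: n p => [|n IHn] p p0; apply/mpolyP => m; rewrite mcoeff0.
  have m0 m' : m' = m :> 'X_{1..0} by apply/mnmP => -[].
  rewrite -(p0 (fun _ => 0)) mevalE {1}(mpolyE p) raddf_sum /=.
  by apply: eq_bigr => m' _; rewrite mcoeffZ mcoeffX (m0 m') eqxx big_ord0.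
rewrite -(mcoeff_mslice p m) (IHn (mslice p _)) ?mcoeff0 // => w.
rewrite -coef_meval_belast.
have -> : meval_belast w p = 0.
  by apply: poly_eq0_of_horner => t; rewrite horner_meval_belast.
by rewrite coef0.
Qed.

End VanishingPolynomials.

Lemma natr_inj_CC : injective (GRing.natmul (1 : CC)).
Proof. by move=> a b /eqP; rewrite (@eqr_nat (Rdefinitions.R)[i]) => /eqP. Qed.

Lemma sum_mul_natr_eq (R : pzSemiRingType) N (F : nat -> R) t :
  \sum_(k < N) F k * (k == t :> nat)%:R = if (t < N)%N then F t else 0.
Proof.
rewrite -(big_ord1_eq +%R) [RHS]big_mkcond /=; apply: eq_bigr => k _.
by case: eqP; rewrite ?mulr1 ?mulr0.
Qed.

Section ShiftMatrix.
Variables (R : pzSemiRingType) (N K : nat).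

Definition shift_mx : 'M[R]_N := \matrix_(j, k) (j == (k + K)%N :> nat)%:R.
Definition embed_mx : 'M[R]_(N, K) := \matrix_(j, b) (j == b :> nat)%:R.

Lemma shift_mx_pow_embed n j b :
  (shift_mx ^+ n *m embed_mx) j b = (j == (b + n * K)%N :> nat)%:R.
Proof.
elim: n j => [|n IHn] j; first by rewrite expr0 mul1mx mxE mul0n addn0.
rewrite exprS -mulmxE -mulmxA mxE.
under eq_bigr => k _ do rewrite IHn mxE.
rewrite (sum_mul_natr_eq _ (fun k => (j == (k + K)%N :> nat)%:R)).
rewrite mulSn [(K + _)%N]addnC addnA; case: ltnP => // overflow; case: eqP => // j_eq.
by have := ltn_ord j; rewrite j_eq; lia.
Qed.

End ShiftMatrix.

Lemma piN_coords_attained K D (c : nat -> 'I_K -> 'I_K -> CC) :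
  exists N (B : 'M[CC]_N) psi psib, forall n a b, (n < D)%N ->
    piN_coord B psi psib n a b = c n a b.
Proof.
case: K c => [|K] c; first by exists 0%N, 0, 0, 0 => ? [].
pose N := (D * K.+1)%N.
pose entry a (j : nat) : CC :=
  2%:R ^+ (j %/ K.+1) * c (j %/ K.+1)%N a (inord (j %% K.+1)).
pose psib : 'M[CC]_(K.+1, N) := \matrix_(a, j) entry a j.
exists N, (shift_mx CC N K.+1 - embed_mx CC N K.+1 *m psib), (embed_mx CC N K.+1), psib.
move=> n a b n_lt_D.
rewrite /piN_coord /Btilde subrK mxE -mulmxA mxE.
under eq_bigr => j _ do rewrite shift_mx_pow_embed mxE.
have in_range : (b + n * K.+1 < N)%N by have := ltn_ord b; rewrite /N; nia.
rewrite (sum_mul_natr_eq _ (entry a)) in_range /entry divnDMl // divn_small // add0n addnC modnMDl modn_small // inord_val.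
rewrite mulrA -exprMn mulVf ?expr1n ?mul1r //.
by apply/eqP; move/(@natr_inj_CC 2 0).
Qed.

Lemma factor_through_inj (I : finType) (T : eqType) (V : Type) (v0 : V)
    (f : I -> T) (x : I -> V) :
  injective f -> exists g : T -> V, forall i, g (f i) = x i.
Proof.
move=> f_inj; exists (fun t => if [pick i | f i == t] is Some i then x i else v0).
by move=> i; case: pickP => [i' /eqP/f_inj -> // | /(_ i)]; rewrite eqxx.
Qed.

Theorem mainTheorem4 (K m : nat) (lab : 'I_m -> nat * 'I_K * 'I_K)
  (lab_inj : injective lab) (f : {mpoly CC[m]}) :
  (forall (N : nat) (B : 'M[CC]_N) (psi : 'M[CC]_(N, K)) (psib : 'M[CC]_(K, N)),
     meval (fun i => piN_coord B psi psib (lab i).1.1 (lab i).1.2 (lab i).2) f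
     = 0) ->
  f = 0.
Proof.
move=> f_vanishes; apply: (mpoly_eq0_of_meval natr_inj_CC) => x.
have [g gE] := factor_through_inj 0 x lab_inj.
pose D := (\max_(i < m) (lab i).1.1).+1.
have [N [B [psi [psib coordE]]]] := piN_coords_attained D (fun n a b => g (n, a, b)).
rewrite -(f_vanishes N B psi psib); apply: meval_eq => i.
rewrite coordE -?surjective_pairing ?gE //.
by rewrite ltnS (leq_bigmax_cond (F := fun i => (lab i).1.1)).
Qed.
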